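(* Let $L : \mathcal M \rightleftarrows \mathcal N : U$ be a Quillen pair between model categories such that (a) $U$ creates weak equivalences (a map $f$ in $\mathcal N$ is a weak equivalence if and only if $Uf$ is), and (b) for every cofibrant object $X$ of $\mathcal M$ that is weakly equivalent to an object in the image of $U$, the unit $X \to ULX$ is a weak equivalence. Suppose moreover there exists a left Bousfield localization $\mathcal M'$ of $\mathcal M$ whose fibrant objects are exactly the fibrant objects of $\mathcal M$ that are weakly equivalent to an object in the image of $U$. Then $L : \mathcal M' \rightleftarrows \mathcal N : U$ is a Quillen equivalence.
   Context: A left Bousfield localization of a model category $\mathcal M$ is a model structure on the same underlying category with the same cofibrations and a class of weak equivalences containing those of $\mathcal M$. *)

From Stdlib Require Import Relations Relation_Operators.

Record Category := {
  Ob :> Type;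
  Hom : Ob -> Ob -> Type;
  idm : forall a, Hom a a;
  comp : forall a b c, Hom b c -> Hom a b -> Hom a c;
  comp_idl : forall a b (f : Hom a b), comp a b b (idm b) f = f;
  comp_idr : forall a b (f : Hom a b), comp a a b f (idm a) = f;
  comp_assoc : forall a b c d (h : Hom c d) (g : Hom b c) (f : Hom a b),
      comp a c d h (comp a b c g f) = comp a b d (comp b c d h g) f
}.
Arguments Hom {C} : rename.
Arguments idm {C} : rename.
Arguments comp {C a b c} : rename.

Record Functor (C D : Category) := {
  fobj :> C -> D;
  fmap : forall a b, Hom a b -> Hom (fobj a) (fobj b);
  fmap_id : forall a, fmap a a (idm a) = idm (fobj a);
  fmap_comp : forall a b c (g : Hom b c) (f : Hom a b),
      fmap a c (comp g f) = comp (fmap b c g) (fmap a b f)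
}.
Arguments fobj {C D}.
Arguments fmap {C D} f {a b} : rename.

Record Adjunction {C D : Category} (L : Functor C D) (U : Functor D C) := {
  adj_unit : forall X : C, Hom X (U (L X));
  adj_counit : forall Y : D, Hom (L (U Y)) Y;
  adj_unit_nat : forall X X' (f : Hom X X'),
      comp (adj_unit X') f = comp (fmap U (fmap L f)) (adj_unit X);
  adj_counit_nat : forall Y Y' (g : Hom Y Y'),
      comp g (adj_counit Y) = comp (adj_counit Y') (fmap L (fmap U g));
  adj_triangle_L : forall X,
      comp (adj_counit (L X)) (fmap L (adj_unit X)) = idm (L X);
  adj_triangle_U : forall Y,
      comp (fmap U (adj_counit Y)) (adj_unit (U Y)) = idm (U Y)
}.
Arguments adj_unit {C D L U}.
Arguments adj_counit {C D L U}.

Definition adjunct {C D : Category} {L : Functor C D} {U : Functor D C}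
  (A : Adjunction L U) {X : C} {Y : D} (f : Hom (L X) Y) : Hom X (U Y) :=
  comp (fmap U f) (adj_unit A X).

Definition MorClass (C : Category) := forall a b : C, Hom a b -> Prop.

Definition is_terminal {C : Category} (t : C) : Prop :=
  forall a : C, exists f : Hom a t, forall g : Hom a t, g = f.
Definition is_initial {C : Category} (i : C) : Prop :=
  forall a : C, exists f : Hom i a, forall g : Hom i a, g = f.

Definition is_pullback {C : Category} {a b c p : C}
  (f : Hom a c) (g : Hom b c) (p1 : Hom p a) (p2 : Hom p b) : Prop :=
  comp f p1 = comp g p2 /\
  forall (q : C) (q1 : Hom q a) (q2 : Hom q b), comp f q1 = comp g q2 ->
    exists h : Hom q p, comp p1 h = q1 /\ comp p2 h = q2 /\
      forall h' : Hom q p, comp p1 h' = q1 -> comp p2 h' = q2 -> h' = h.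

Definition is_pushout {C : Category} {a b c p : C}
  (f : Hom c a) (g : Hom c b) (i1 : Hom a p) (i2 : Hom b p) : Prop :=
  comp i1 f = comp i2 g /\
  forall (q : C) (q1 : Hom a q) (q2 : Hom b q), comp q1 f = comp q2 g ->
    exists h : Hom p q, comp h i1 = q1 /\ comp h i2 = q2 /\
      forall h' : Hom p q, comp h' i1 = q1 -> comp h' i2 = q2 -> h' = h.

(* terminal object + pullbacks = all finite limits; dually for colimits *)
Definition has_finite_limits (C : Category) : Prop :=
  (exists t : C, is_terminal t) /\
  forall (a b c : C) (f : Hom a c) (g : Hom b c),
    exists (p : C) (p1 : Hom p a) (p2 : Hom p b), is_pullback f g p1 p2.

Definition has_finite_colimits (C : Category) : Prop :=
  (exists i : C, is_initial i) /\
  forall (a b c : C) (f : Hom c a) (g : Hom c b),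
    exists (p : C) (i1 : Hom a p) (i2 : Hom b p), is_pushout f g i1 i2.

Definition is_retract_of {C : Category} {a b c d : C}
  (f : Hom a b) (g : Hom c d) : Prop :=
  exists (i : Hom a c) (r : Hom c a) (j : Hom b d) (s : Hom d b),
    comp r i = idm a /\ comp s j = idm b /\
    comp g i = comp j f /\ comp f r = comp s g.

Definition has_LLP {C : Category} {a b x y : C} (i : Hom a b) (p : Hom x y) : Prop :=
  forall (u : Hom a x) (v : Hom b y), comp p u = comp v i ->
    exists h : Hom b x, comp h i = u /\ comp p h = v.

Definition subcategory_class {C : Category} (P : MorClass C) : Prop :=
  (forall a, P a a (idm a)) /\
  (forall a b c (g : Hom b c) (f : Hom a b), P _ _ f -> P _ _ g -> P _ _ (comp g f)).

Definition retract_closed {C : Category} (P : MorClass C) : Prop :=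
  forall a b c d (f : Hom a b) (g : Hom c d), is_retract_of f g -> P _ _ g -> P _ _ f.

Definition inter {C : Category} (P Q : MorClass C) : MorClass C :=
  fun a b f => P a b f /\ Q a b f.

Record ModelStructure (C : Category) := {
  W : MorClass C;
  Cof : MorClass C;
  Fib : MorClass C;
  ms_limits : has_finite_limits C;
  ms_colimits : has_finite_colimits C;
  ms_W_sub : subcategory_class W;
  ms_Cof_sub : subcategory_class Cof;
  ms_Fib_sub : subcategory_class Fib;
  ms_2of3_gf : forall a b c (g : Hom b c) (f : Hom a b),
      W _ _ f -> W _ _ g -> W _ _ (comp g f);
  ms_2of3_f : forall a b c (g : Hom b c) (f : Hom a b),
      W _ _ g -> W _ _ (comp g f) -> W _ _ f;
  ms_2of3_g : forall a b c (g : Hom b c) (f : Hom a b),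
      W _ _ f -> W _ _ (comp g f) -> W _ _ g;
  ms_W_retract : retract_closed W;
  ms_Cof_retract : retract_closed Cof;
  ms_Fib_retract : retract_closed Fib;
  ms_lift_acof : forall a b x y (i : Hom a b) (p : Hom x y),
      Cof _ _ i -> W _ _ i -> Fib _ _ p -> has_LLP i p;
  ms_lift_afib : forall a b x y (i : Hom a b) (p : Hom x y),
      Cof _ _ i -> Fib _ _ p -> W _ _ p -> has_LLP i p;
  ms_fact_acof_fib : forall a b (f : Hom a b),
      exists (c : C) (i : Hom a c) (p : Hom c b),
        Cof _ _ i /\ W _ _ i /\ Fib _ _ p /\ comp p i = f;
  ms_fact_cof_afib : forall a b (f : Hom a b),
      exists (c : C) (i : Hom a c) (p : Hom c b),
        Cof _ _ i /\ Fib _ _ p /\ W _ _ p /\ comp p i = f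
}.
Arguments W {C} m {a b}.
Arguments Cof {C} m {a b}.
Arguments Fib {C} m {a b}.

Definition fibrant {C : Category} (M : ModelStructure C) (X : C) : Prop :=
  forall (t : C) (f : Hom X t), is_terminal t -> Fib M f.

Definition cofibrant {C : Category} (M : ModelStructure C) (X : C) : Prop :=
  forall (i : C) (f : Hom i X), is_initial i -> Cof M f.

Definition weakly_equivalent {C : Category} (M : ModelStructure C) : relation C :=
  clos_refl_sym_trans C (fun a b => exists f : Hom a b, W M f).

Definition left_Bousfield_localization {C : Category}
  (M' M : ModelStructure C) : Prop :=
  (forall a b (f : Hom a b), Cof M' f <-> Cof M f) /\
  (forall a b (f : Hom a b), W M f -> W M' f).

Definition QuillenPair {C D : Category} (M : ModelStructure C) (N : ModelStructure D)
  (L : Functor C D) (U : Functor D C) (A : Adjunction L U) : Prop :=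
  (forall a b (f : Hom a b), Cof M f -> Cof N (fmap L f)) /\
  (forall a b (f : Hom a b), Cof M f -> W M f -> W N (fmap L f)).

Definition QuillenEquivalence {C D : Category} (M : ModelStructure C)
  (N : ModelStructure D) (L : Functor C D) (U : Functor D C)
  (A : Adjunction L U) : Prop :=
  QuillenPair M N L U A /\
  forall (X : C) (Y : D) (f : Hom (L X) Y),
    cofibrant M X -> fibrant N Y -> (W N f <-> W M (adjunct A f)).

(** The fibrant objects of the localization [M'] are the local objects, and
    between local objects the weak equivalences and fibrations of [M] and [M']
    coincide. Since [U] takes [N]-fibrant objects to local ones, adjunction
    turns an [M']-acyclic cofibration [i] into a map [L i] lifting against every
    fibration between fibrant objects, and such a map is a weak equivalence; so
    [L -| U] is still a Quillen pair. For cofibrant [X], the unit at a local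
    fibrant replacement [X -> X'] is a weak equivalence by hypothesis (b), hence
    so is the unit at [X]; as [U] creates weak equivalences, [f : L X -> Y] is a
    weak equivalence iff its adjunct [U f o eta_X] is. *)
From Stdlib Require Import Relation_Operators.

Local Arguments comp_idl {c0 a b} f.
Local Arguments comp_idr {c0 a b} f.
Local Arguments comp_assoc {c0 a b c d} h g f.
Local Arguments fmap_comp {C D f0 a b c} g f.
Local Arguments adj_unit_nat {C D L U a X X'} f.
Local Arguments adj_counit_nat {C D L U a Y Y'} g.
Local Arguments adj_triangle_L {C D L U} a X.
Local Arguments adj_triangle_U {C D L U} a Y.
Local Arguments ms_2of3_gf {C} m {a b c} g f.
Local Arguments ms_2of3_f {C} m {a b c} g f.
Local Arguments ms_2of3_g {C} m {a b c} g f.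
Local Arguments ms_lift_acof {C} m {a b x y i p}.
Local Arguments ms_lift_afib {C} m {a b x y i p}.
Local Arguments ms_fact_acof_fib {C} m {a b} f.
Local Arguments ms_fact_cof_afib {C} m {a b} f.
Local Arguments ms_W_retract {C} m {a b c d f g}.
Local Arguments ms_Cof_retract {C} m {a b c d f g}.
Local Arguments ms_Fib_retract {C} m {a b c d f g}.

Section CategoryFacts.
Context {C : Category}.

Lemma terminal_unique (t : C) : is_terminal t -> forall a (f g : Hom a t), f = g.
Proof. intros Ht a f g. destruct (Ht a) as [h Hh]. now rewrite (Hh f), (Hh g). Qed.

Lemma initial_unique (i : C) : is_initial i -> forall a (f g : Hom i a), f = g.
Proof. intros Hi a f g. destruct (Hi a) as [h Hh]. now rewrite (Hh f), (Hh g). Qed.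

Lemma pullback_hom_ext {a b c p : C} {f : Hom a c} {g : Hom b c} {p1 : Hom p a} {p2 : Hom p b} :
  is_pullback f g p1 p2 -> forall z (h1 h2 : Hom z p),
    comp p1 h1 = comp p1 h2 -> comp p2 h1 = comp p2 h2 -> h1 = h2.
Proof.
  intros [Hc Hu] z h1 h2 E1 E2.
  destruct (Hu z (comp p1 h1) (comp p2 h1)) as [h [_ [_ Huniq]]].
  { now rewrite !comp_assoc, Hc. }
  rewrite (Huniq h1), (Huniq h2); auto.
Qed.

Lemma pushout_sym {a b c p : C} {f : Hom c a} {g : Hom c b} {i1 : Hom a p} {i2 : Hom b p} :
  is_pushout f g i1 i2 -> is_pushout g f i2 i1.
Proof.
  intros [Hc Hu]. split; [now symmetry|].
  intros q q1 q2 Hq. destruct (Hu q q2 q1 (eq_sym Hq)) as [h [H1 [H2 H3]]].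
  exists h. repeat split; auto.
Qed.

Lemma pushout_has_LLP {a b c p x y : C} {f : Hom c a} {g : Hom c b} {i1 : Hom a p}
  {i2 : Hom b p} (q : Hom x y) :
  is_pushout f g i1 i2 -> has_LLP f q -> has_LLP i2 q.
Proof.
  intros [Hc Hu] Hf u v Hsq.
  destruct (Hf (comp u g) (comp v i1)) as [h [Hh1 Hh2]].
  { now rewrite comp_assoc, Hsq, <- comp_assoc, <- Hc, comp_assoc. }
  destruct (Hu x h u Hh1) as [m [Hm1 [Hm2 _]]].
  exists m. split; [exact Hm2|].
  destruct (Hu y (comp v i1) (comp v i2)) as [n [_ [_ Hn]]].
  { now rewrite <- !comp_assoc, Hc. }
  rewrite (Hn (comp q m)), (Hn v); auto.
  - now rewrite <- comp_assoc, Hm1.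
  - now rewrite <- comp_assoc, Hm2.
Qed.

Lemma pullback_has_LLP {a b c p x y : C} {f : Hom a c} {g : Hom b c} {p1 : Hom p a}
  {p2 : Hom p b} (i : Hom x y) :
  is_pullback f g p1 p2 -> has_LLP i g -> has_LLP i p1.
Proof.
  intros [Hc Hu] Hg u v Hsq.
  destruct (Hg (comp p2 u) (comp f v)) as [h [Hh1 Hh2]].
  { now rewrite comp_assoc, <- Hc, <- comp_assoc, Hsq, comp_assoc. }
  destruct (Hu y v h (eq_sym Hh2)) as [m [Hm1 [Hm2 _]]].
  exists m. split; [|exact Hm1].
  destruct (Hu x (comp p1 u) (comp p2 u)) as [n [_ [_ Hn]]].
  { now rewrite !comp_assoc, Hc. }
  rewrite (Hn (comp m i)), (Hn u); auto.
  - now rewrite comp_assoc, Hm1.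
  - now rewrite comp_assoc, Hm2.
Qed.

Lemma retract_of_left_factor {a c b : C} (j : Hom a c) (p : Hom c b) (i : Hom a b) :
  comp p j = i -> has_LLP i p -> is_retract_of i j.
Proof.
  intros Hpj Hi. destruct (Hi j (idm b)) as [h [Hh1 Hh2]].
  { now rewrite Hpj, comp_idl. }
  exists (idm a), (idm a), h, p. repeat split.
  - apply comp_idl.
  - exact Hh2.
  - now rewrite comp_idr.
  - now rewrite comp_idr.
Qed.

Lemma retract_of_right_factor {x z y : C} (j : Hom x z) (q' : Hom z y) (q : Hom x y) :
  comp q' j = q -> has_LLP j q -> is_retract_of q q'.
Proof.
  intros Hqj Hj. destruct (Hj (idm x) q') as [r [Hr1 Hr2]].
  { now rewrite Hqj, comp_idr. }
  exists j, r, (idm y), (idm y). repeat split.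
  - exact Hr1.
  - apply comp_idl.
  - now rewrite comp_idl.
  - now rewrite comp_idl.
Qed.

Lemma retract_of_section {a b : C} (j : Hom a b) (r : Hom b a) :
  comp r j = idm a -> is_retract_of j (comp j r).
Proof.
  intros Hr. exists j, r, (idm b), (idm b). repeat split.
  - exact Hr.
  - apply comp_idl.
  - now rewrite <- comp_assoc, Hr, comp_idr, comp_idl.
  - now rewrite comp_idl.
Qed.

Lemma extension_of_LLP {a b y t : C} (i : Hom a b) (p : Hom y t) :
  is_terminal t -> has_LLP i p -> forall f : Hom a y, exists g : Hom b y, comp g i = f.
Proof.
  intros Ht Hi f. destruct (Ht b) as [v _].
  destruct (Hi f v) as [g [Hg _]]; [apply (terminal_unique t Ht) | now exists g].
Qed.

End CategoryFacts.

Section AdjunctionFacts.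
Context {C D : Category} {L : Functor C D} {U : Functor D C} (A : Adjunction L U).

Lemma has_LLP_adjoint {a b : C} (i : Hom a b) {x y : D} (p : Hom x y) :
  has_LLP (fmap L i) p <-> has_LLP i (fmap U p).
Proof.
  split; intros H u v Hsq.
  - destruct (H (comp (adj_counit A x) (fmap L u)) (comp (adj_counit A y) (fmap L v)))
      as [h [H1 H2]].
    { now rewrite comp_assoc, adj_counit_nat, <- comp_assoc, <- fmap_comp, Hsq,
        fmap_comp, comp_assoc. }
    exists (comp (fmap U h) (adj_unit A b)). split.
    + rewrite <- comp_assoc, adj_unit_nat, comp_assoc, <- fmap_comp, H1, fmap_comp,
        <- comp_assoc, <- adj_unit_nat, comp_assoc, adj_triangle_U.
      apply comp_idl.
    + rewrite comp_assoc, <- fmap_comp, H2, fmap_comp, <- comp_assoc, <- adj_unit_nat,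
        comp_assoc, adj_triangle_U.
      apply comp_idl.
  - destruct (H (comp (fmap U u) (adj_unit A a)) (comp (fmap U v) (adj_unit A b)))
      as [h [H1 H2]].
    { now rewrite comp_assoc, <- fmap_comp, Hsq, fmap_comp, <- !comp_assoc, adj_unit_nat. }
    exists (comp (adj_counit A x) (fmap L h)). split.
    + rewrite <- comp_assoc, <- fmap_comp, H1, fmap_comp, comp_assoc, <- adj_counit_nat,
        <- comp_assoc, adj_triangle_L.
      apply comp_idr.
    + rewrite comp_assoc, adj_counit_nat, <- comp_assoc, <- fmap_comp, H2, fmap_comp,
        comp_assoc, <- adj_counit_nat, <- comp_assoc, adj_triangle_L.
      apply comp_idr.
Qed.

Lemma is_terminal_U (t : D) : is_terminal t -> is_terminal (U t).
Proof.
  intros Ht X. destruct (Ht (L X)) as [f Hf].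
  exists (comp (fmap U f) (adj_unit A X)). intros g.
  rewrite <- (Hf (comp (adj_counit A t) (fmap L g))).
  now rewrite fmap_comp, <- comp_assoc, <- adj_unit_nat, comp_assoc, adj_triangle_U, comp_idl.
Qed.

End AdjunctionFacts.

Section ModelCategoryFacts.
Context {C : Category} (M : ModelStructure C).

Lemma W_id (a : C) : W M (idm a).
Proof. apply (proj1 (ms_W_sub C M)). Qed.

Lemma Fib_comp {a b c : C} (g : Hom b c) (f : Hom a b) :
  Fib M f -> Fib M g -> Fib M (comp g f).
Proof. apply (proj2 (ms_Fib_sub C M)). Qed.

Lemma W_of_retraction {a b : C} (j : Hom a b) (r : Hom b a) :
  comp r j = idm a -> W M (comp j r) -> W M j.
Proof. intros Hr. exact (ms_W_retract M (retract_of_section j r Hr)). Qed.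

Lemma Fib_between_terminal (t t' : C) (phi : Hom t t') :
  is_terminal t -> is_terminal t' -> Fib M phi.
Proof.
  intros Ht Ht'. destruct (Ht t') as [psi _].
  apply (ms_Fib_retract M (g := idm t')); [|apply (proj1 (ms_Fib_sub C M))].
  exists phi, psi, (idm t'), (idm t'). repeat split.
  - apply (terminal_unique t Ht).
  - apply comp_idl.
  - rewrite comp_idl. apply (terminal_unique t' Ht').
Qed.

Lemma fibrant_of_Fib_terminal (X t : C) (f : Hom X t) :
  is_terminal t -> Fib M f -> fibrant M X.
Proof.
  intros Ht Hf t' g Ht'. destruct (Ht' t) as [phi _].
  rewrite (terminal_unique t' Ht' _ g (comp phi f)).
  exact (Fib_comp _ _ Hf (Fib_between_terminal t t' phi Ht Ht')).
Qed.

Lemma fibrant_terminal (t : C) : is_terminal t -> fibrant M t.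
Proof.
  intros Ht. apply (fibrant_of_Fib_terminal t t (idm t) Ht), (proj1 (ms_Fib_sub C M)).
Qed.

Lemma fibrant_of_Fib {Z Y : C} (q : Hom Z Y) : Fib M q -> fibrant M Y -> fibrant M Z.
Proof.
  intros Hq HY. destruct (ms_limits C M) as [[t Ht] _]. destruct (Ht Y) as [tY _].
  exact (fibrant_of_Fib_terminal Z t (comp tY q) Ht (Fib_comp _ _ Hq (HY t tY Ht))).
Qed.

Lemma cofibrant_of_Cof {X X' : C} (j : Hom X X') : cofibrant M X -> Cof M j -> cofibrant M X'.
Proof.
  intros HX Hj i g Hi. destruct (Hi X) as [g0 _].
  rewrite (initial_unique i Hi _ g (comp j g0)).
  exact (proj2 (ms_Cof_sub C M) _ _ _ _ _ (HX i g0 Hi) Hj).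
Qed.

Lemma fibrant_replacement (X : C) :
  exists (X' : C) (j : Hom X X'), Cof M j /\ W M j /\ fibrant M X'.
Proof.
  destruct (ms_limits C M) as [[t Ht] _]. destruct (Ht X) as [tX _].
  destruct (ms_fact_acof_fib M tX) as [X' [j [q [Hj1 [Hj2 [Hq _]]]]]].
  exists X', j. repeat split; auto. exact (fibrant_of_Fib_terminal X' t q Ht Hq).
Qed.

Lemma extension_along_acyclic_cofibration {a b Y : C} (i : Hom a b) :
  Cof M i -> W M i -> fibrant M Y -> forall f : Hom a Y, exists g : Hom b Y, comp g i = f.
Proof.
  intros Hi1 Hi2 HY. destruct (ms_limits C M) as [[t Ht] _]. destruct (Ht Y) as [tY _].
  exact (extension_of_LLP i tY Ht (ms_lift_acof M Hi1 Hi2 (HY t tY Ht))).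
Qed.

Lemma acyclic_cofibration_of_LLP {a b : C} (i : Hom a b) :
  (forall x y (p : Hom x y), Fib M p -> has_LLP i p) -> Cof M i /\ W M i.
Proof.
  intros H. destruct (ms_fact_acof_fib M i) as [c [j [p [Hj1 [Hj2 [Hp Hpj]]]]]].
  pose proof (retract_of_left_factor j p i Hpj (H _ _ p Hp)) as Hret.
  exact (conj (ms_Cof_retract M Hret Hj1) (ms_W_retract M Hret Hj2)).
Qed.

Lemma fibration_of_RLP {x y : C} (p : Hom x y) :
  (forall a b (i : Hom a b), Cof M i -> W M i -> has_LLP i p) -> Fib M p.
Proof.
  intros H. destruct (ms_fact_acof_fib M p) as [c [j [q [Hj1 [Hj2 [Hq Hqj]]]]]].
  exact (ms_Fib_retract M (retract_of_right_factor j q p Hqj (H _ _ j Hj1 Hj2)) Hq).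
Qed.

Lemma acyclic_fibration_of_RLP {x y : C} (p : Hom x y) :
  (forall a b (i : Hom a b), Cof M i -> has_LLP i p) -> Fib M p /\ W M p.
Proof.
  intros H. destruct (ms_fact_cof_afib M p) as [c [j [q [Hj [Hq1 [Hq2 Hqj]]]]]].
  pose proof (retract_of_right_factor j q p Hqj (H _ _ j Hj)) as Hret.
  exact (conj (ms_Fib_retract M Hret Hq1) (ms_W_retract M Hret Hq2)).
Qed.

Lemma pushout_acyclic_cofibration {a b c p : C} {f : Hom c a} {g : Hom c b}
  {i1 : Hom a p} {i2 : Hom b p} :
  is_pushout f g i1 i2 -> Cof M f -> W M f -> Cof M i2 /\ W M i2.
Proof.
  intros Hpo Hf1 Hf2. apply acyclic_cofibration_of_LLP. intros x y q Hq.
  exact (pushout_has_LLP q Hpo (ms_lift_acof M Hf1 Hf2 Hq)).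
Qed.

Lemma pullback_fibration {a b c p : C} {f : Hom a c} {g : Hom b c}
  {p1 : Hom p a} {p2 : Hom p b} :
  is_pullback f g p1 p2 -> Fib M g -> Fib M p1.
Proof.
  intros Hpb Hg. apply fibration_of_RLP. intros x y i Hi1 Hi2.
  exact (pullback_has_LLP i Hpb (ms_lift_acof M Hi1 Hi2 Hg)).
Qed.

Definition lifts_against_fibrant_fibrations {P Q : C} (k : Hom P Q) : Prop :=
  forall (E F : C) (p : Hom E F), Fib M p -> fibrant M E -> fibrant M F -> has_LLP k p.

Lemma lifts_against_fibrant_fibrations_pushout {a b c p : C} {f : Hom c a} {g : Hom c b}
  {i1 : Hom a p} {i2 : Hom b p} :
  is_pushout f g i1 i2 -> lifts_against_fibrant_fibrations f ->
  lifts_against_fibrant_fibrations i2.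
Proof. intros Hpo Hf E F q Hq HE HF. exact (pushout_has_LLP q Hpo (Hf E F q Hq HE HF)). Qed.

(* [f] and [g] are right homotopic: lifting [k] against a path object
   [Z -> ZI -> Z x Z] gives a homotopy [H : Q -> ZI] between them. *)
Lemma W_transfer_along_lifting {P Q Z : C} (k : Hom P Q) (f g : Hom Q Z) :
  lifts_against_fibrant_fibrations k -> fibrant M Z -> comp f k = comp g k ->
  W M f -> W M g.
Proof.
  intros Hk HZ Hfg Hf.
  destruct (ms_limits C M) as [[t Ht] Hpb]. destruct (Ht Z) as [tZ _].
  destruct (Hpb Z Z t tZ tZ) as [Z2 [pr1 [pr2 Hprod]]].
  assert (HZ2 : fibrant M Z2)
    by exact (fibrant_of_Fib pr1 (pullback_fibration Hprod (HZ t tZ Ht)) HZ).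
  destruct (proj2 Hprod Z (idm Z) (idm Z) (terminal_unique t Ht _ _ _))
    as [diag [Hdiag1 [Hdiag2 _]]].
  destruct (ms_fact_acof_fib M diag) as [ZI [s [pi [_ [Hs [Hpi Hpis]]]]]].
  assert (Hev : forall pr : Hom Z2 Z, comp pr diag = idm Z -> W M (comp pr pi)).
  { intros pr Hpr. apply (ms_2of3_g M _ s Hs).
    rewrite <- comp_assoc, Hpis, Hpr. apply W_id. }
  destruct (proj2 Hprod Q f g (terminal_unique t Ht _ _ _)) as [fg [Hfg1 [Hfg2 _]]].
  destruct (Hk _ _ pi Hpi (fibrant_of_Fib pi Hpi HZ2) HZ2 (comp s (comp f k)) fg)
    as [H [_ HH]].
  { apply (pullback_hom_ext Hprod); rewrite !comp_assoc, <- (comp_assoc _ pi s), Hpis.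
    - now rewrite Hdiag1, comp_idl, Hfg1.
    - now rewrite Hdiag2, comp_idl, Hfg2. }
  assert (HHW : W M H).
  { apply (ms_2of3_f M (comp pr1 pi) H (Hev pr1 Hdiag1)). now rewrite <- comp_assoc, HH, Hfg1. }
  rewrite <- Hfg2, <- HH, comp_assoc. exact (ms_2of3_gf M _ _ HHW (Hev pr2 Hdiag2)).
Qed.

Lemma W_of_lifts_with_fibrant_domain {P Q : C} (k : Hom P Q) :
  lifts_against_fibrant_fibrations k -> fibrant M P -> W M k.
Proof.
  intros Hk HP. destruct (ms_limits C M) as [[t Ht] _]. destruct (Ht P) as [tP _].
  destruct (extension_of_LLP k tP Ht (Hk _ _ tP (HP t tP Ht) HP (fibrant_terminal t Ht))
              (idm P)) as [r Hr].
  destruct (fibrant_replacement Q) as [Q' [e [_ [He HQ']]]].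
  apply (W_of_retraction k r Hr), (ms_2of3_f M e _ He).
  apply (W_transfer_along_lifting k e (comp e (comp k r)) Hk HQ'); [|exact He].
  now rewrite <- comp_assoc, <- (comp_assoc k r k), Hr, comp_idr.
Qed.

Lemma W_of_lifts_against_fibrant_fibrations {P Q : C} (k : Hom P Q) :
  lifts_against_fibrant_fibrations k -> W M k.
Proof.
  intros Hk. destruct (fibrant_replacement P) as [P' [a [Ha1 [Ha2 HP']]]].
  destruct (ms_colimits C M) as [_ Hpo]. destruct (Hpo P' Q P a k) as [Q' [k' [b Hpush]]].
  destruct (pushout_acyclic_cofibration Hpush Ha1 Ha2) as [_ Hb].
  assert (Hk' : W M k').
  { apply W_of_lifts_with_fibrant_domain; [|exact HP'].
    exact (lifts_against_fibrant_fibrations_pushout (pushout_sym Hpush) Hk). }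
  apply (ms_2of3_f M b k Hb). rewrite <- (proj1 Hpush). exact (ms_2of3_gf M _ _ Ha2 Hk').
Qed.

End ModelCategoryFacts.

Section LeftBousfieldLocalization.
Context {C : Category} (M M' : ModelStructure C) (HM' : left_Bousfield_localization M' M).

Lemma acyclic_fibration_of_loc {x y : C} (q : Hom x y) :
  Fib M' q -> W M' q -> Fib M q /\ W M q.
Proof.
  intros Hq1 Hq2. apply acyclic_fibration_of_RLP. intros a b i Hi.
  exact (ms_lift_afib M' (proj2 (proj1 HM' _ _ i) Hi) Hq1 Hq2).
Qed.

(* [f] and [g] are left homotopic through an [M]-cylinder on [Z +_X Z],
   whose inclusions are [M']-acyclic cofibrations. *)
Lemma W_transfer_along_loc_acyclic_cofibration {X Z Y : C} (j : Hom X Z) (f g : Hom Z Y) :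
  Cof M' j -> W M' j -> fibrant M' Y -> comp f j = comp g j -> W M f -> W M g.
Proof.
  intros Hj1 Hj2 HY Hfg Hf. destruct HM' as [HC HW].
  destruct (ms_colimits C M) as [_ Hpo]. destruct (Hpo Z Z X j j) as [Q [in0 [in1 Hpush]]].
  destruct (pushout_acyclic_cofibration M' (pushout_sym Hpush) Hj1 Hj2) as [_ Hin0].
  destruct (proj2 Hpush Z (idm Z) (idm Z) eq_refl) as [fold [Hfold0 [Hfold1 _]]].
  destruct (proj2 Hpush Y f g Hfg) as [fg [Hfg0 [Hfg1 _]]].
  destruct (ms_fact_cof_afib M fold) as [Cyl [c [p [Hc [_ [Hp Hpc]]]]]].
  assert (Hend : forall ini : Hom Z Q, comp fold ini = idm Z -> W M (comp c ini)).
  { intros ini Hini. apply (ms_2of3_f M p _ Hp). rewrite comp_assoc, Hpc, Hini. apply W_id. }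
  assert (Hc' : W M' c) by exact (ms_2of3_g M' c in0 Hin0 (HW _ _ _ (Hend in0 Hfold0))).
  destruct (extension_along_acyclic_cofibration M' c (proj2 (HC _ _ c) Hc) Hc' HY fg)
    as [K HK].
  assert (HKW : W M K).
  { apply (ms_2of3_g M K (comp c in0) (Hend in0 Hfold0)). now rewrite comp_assoc, HK, Hfg0. }
  rewrite <- Hfg1, <- HK, <- comp_assoc. exact (ms_2of3_gf M _ _ (Hend in1 Hfold1) HKW).
Qed.

Lemma W_of_loc_acyclic_cofibration_between_fibrant {X Z : C} (j : Hom X Z) :
  Cof M' j -> W M' j -> fibrant M' X -> fibrant M' Z -> W M j.
Proof.
  intros Hj1 Hj2 HX HZ.
  destruct (extension_along_acyclic_cofibration M' j Hj1 Hj2 HX (idm X)) as [r Hr].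
  apply (W_of_retraction M j r Hr).
  apply (W_transfer_along_loc_acyclic_cofibration j (idm Z) (comp j r) Hj1 Hj2 HZ).
  - now rewrite <- comp_assoc, Hr, comp_idl, comp_idr.
  - apply W_id.
Qed.

Lemma Fib_loc_of_Fib_between_fibrant {X Y : C} (q : Hom X Y) :
  Fib M q -> fibrant M' X -> fibrant M' Y -> Fib M' q.
Proof.
  intros Hq HX HY. destruct (ms_fact_acof_fib M' q) as [Z [j [q' [Hj1 [Hj2 [Hq' Hqj]]]]]].
  pose proof (W_of_loc_acyclic_cofibration_between_fibrant j Hj1 Hj2 HX
                (fibrant_of_Fib M' q' Hq' HY)) as Hj.
  pose proof (ms_lift_acof M (proj1 (proj1 HM' _ _ j) Hj1) Hj Hq) as Hlift.
  exact (ms_Fib_retract M' (retract_of_right_factor j q' q Hqj Hlift) Hq').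
Qed.

Lemma W_of_loc_W_between_fibrant {X Y : C} (w : Hom X Y) :
  W M' w -> fibrant M' X -> fibrant M' Y -> W M w.
Proof.
  intros Hw HX HY. destruct (ms_fact_acof_fib M' w) as [Z [j [q [Hj1 [Hj2 [Hq Hqj]]]]]].
  pose proof (W_of_loc_acyclic_cofibration_between_fibrant j Hj1 Hj2 HX
                (fibrant_of_Fib M' q Hq HY)) as Hj.
  assert (Hq2 : W M' q) by (apply (ms_2of3_g M' q j Hj2); now rewrite Hqj).
  rewrite <- Hqj. exact (ms_2of3_gf M _ _ Hj (proj2 (acyclic_fibration_of_loc q Hq Hq2))).
Qed.

End LeftBousfieldLocalization.

Section RightQuillen.
Context {C D : Category} {M : ModelStructure C} {N : ModelStructure D}
  {L : Functor C D} {U : Functor D C} {A : Adjunction L U}.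
Hypothesis HQ : QuillenPair M N L U A.

Lemma Fib_U {x y : D} (p : Hom x y) : Fib N p -> Fib M (fmap U p).
Proof.
  intros Hp. apply fibration_of_RLP. intros a b i Hi1 Hi2. apply (has_LLP_adjoint A).
  exact (ms_lift_acof N (proj1 HQ _ _ i Hi1) (proj2 HQ _ _ i Hi1 Hi2) Hp).
Qed.

Lemma fibrant_U (Y : D) : fibrant N Y -> fibrant M (U Y).
Proof.
  intros HY. destruct (ms_limits D N) as [[t Ht] _]. destruct (Ht Y) as [tY _].
  exact (fibrant_of_Fib_terminal M (U Y) (U t) (fmap U tY) (is_terminal_U A t Ht)
           (Fib_U tY (HY t tY Ht))).
Qed.

End RightQuillen.

Section LocalizedQuillenPair.
Context {C D : Category} {M : ModelStructure C} {N : ModelStructure D}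
  {L : Functor C D} {U : Functor D C} {A : Adjunction L U} {M' : ModelStructure C}.
Hypothesis HQ : QuillenPair M N L U A.
Hypothesis Hcreate : forall (a b : D) (f : Hom a b), W N f <-> W M (fmap U f).
Hypothesis Hunit : forall X : C, cofibrant M X ->
  (exists Y : D, weakly_equivalent M X (U Y)) -> W M (adj_unit A X).
Hypothesis HM' : left_Bousfield_localization M' M.
Hypothesis Hfib : forall X : C, fibrant M' X <->
  (fibrant M X /\ exists Y : D, weakly_equivalent M X (U Y)).

Lemma fibrant_loc_U (Y : D) : fibrant N Y -> fibrant M' (U Y).
Proof.
  intros HY. apply Hfib. split; [exact (fibrant_U HQ Y HY)|].
  exists Y. apply rst_refl.
Qed.

Lemma W_L_of_loc_acyclic_cofibration {a b : C} (i : Hom a b) :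
  Cof M' i -> W M' i -> W N (fmap L i).
Proof.
  intros Hi1 Hi2. apply W_of_lifts_against_fibrant_fibrations.
  intros E F p Hp HE HF. apply (has_LLP_adjoint A), (ms_lift_acof M' Hi1 Hi2).
  apply (Fib_loc_of_Fib_between_fibrant M M' HM' _ (Fib_U HQ p Hp));
    apply fibrant_loc_U; assumption.
Qed.

Lemma QuillenPair_loc : QuillenPair M' N L U A.
Proof.
  split.
  - intros a b f Hf. exact (proj1 HQ _ _ f (proj1 (proj1 HM' _ _ f) Hf)).
  - exact (@W_L_of_loc_acyclic_cofibration).
Qed.

Lemma fibrant_replacement_loc_W_unit (X : C) : cofibrant M' X ->
  exists (X' : C) (j : Hom X X'),
    Cof M' j /\ W M' j /\ fibrant M' X' /\ W M (adj_unit A X').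
Proof.
  intros HX. destruct (fibrant_replacement M' X) as [X' [j [Hj1 [Hj2 HX']]]].
  exists X', j. repeat split; auto.
  apply Hunit; [|exact (proj2 (proj1 (Hfib X') HX'))].
  apply (cofibrant_of_Cof M j); [|exact (proj1 (proj1 HM' _ _ j) Hj1)].
  intros i g Hi. exact (proj1 (proj1 HM' _ _ g) (HX i g Hi)).
Qed.

Lemma W_loc_unit (X : C) : cofibrant M' X -> W M' (adj_unit A X).
Proof.
  intros HX. destruct (fibrant_replacement_loc_W_unit X HX) as [X' [j [Hj1 [Hj2 [_ Heta]]]]].
  apply (ms_2of3_f M' (fmap U (fmap L j))).
  - exact (proj2 HM' _ _ _ (proj1 (Hcreate _ _ _) (W_L_of_loc_acyclic_cofibration j Hj1 Hj2))).
  - rewrite <- adj_unit_nat. exact (ms_2of3_gf M' _ _ Hj2 (proj2 HM' _ _ _ Heta)).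
Qed.

Lemma W_loc_adjunct_of_W (X : C) (Y : D) (f : Hom (L X) Y) :
  cofibrant M' X -> W N f -> W M' (adjunct A f).
Proof.
  intros HX Hf.
  exact (ms_2of3_gf M' _ _ (W_loc_unit X HX) (proj2 HM' _ _ _ (proj1 (Hcreate _ _ f) Hf))).
Qed.

(* Extend [f] along [L j] for a local fibrant replacement [j : X -> X'];
   the adjunct of the extension is an [M']-equivalence between local objects,
   hence an [M]-equivalence. *)
Lemma W_of_W_loc_adjunct (X : C) (Y : D) (f : Hom (L X) Y) :
  cofibrant M' X -> fibrant N Y -> W M' (adjunct A f) -> W N f.
Proof.
  intros HX HY Hadj.
  pose proof (ms_2of3_g M' _ _ (W_loc_unit X HX) Hadj) as HUf.
  destruct (fibrant_replacement_loc_W_unit X HX) as [X' [j [Hj1 [Hj2 [HX' Heta]]]]].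
  pose proof (W_L_of_loc_acyclic_cofibration j Hj1 Hj2) as HLj.
  destruct (extension_along_acyclic_cofibration N (fmap L j)
              (proj1 QuillenPair_loc _ _ j Hj1) HLj HY f) as [g Hg].
  assert (HUg : W M' (fmap U g)).
  { apply (ms_2of3_g M' _ (fmap U (fmap L j)) (proj2 HM' _ _ _ (proj1 (Hcreate _ _ _) HLj))).
    now rewrite <- fmap_comp, Hg. }
  assert (Hadjg : W M (comp (fmap U g) (adj_unit A X'))).
  { apply (W_of_loc_W_between_fibrant M M' HM'); [|exact HX'|exact (fibrant_loc_U Y HY)].
    exact (ms_2of3_gf M' _ _ (proj2 HM' _ _ _ Heta) HUg). }
  rewrite <- Hg. apply (ms_2of3_gf N _ _ HLj), Hcreate.
  exact (ms_2of3_g M _ _ Heta Hadjg).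
Qed.

End LocalizedQuillenPair.

Theorem mainTheorem2 (C D : Category) (M : ModelStructure C) (N : ModelStructure D)
  (L : Functor C D) (U : Functor D C) (A : Adjunction L U)
  (HQ : QuillenPair M N L U A)
  (Hcreate : forall (a b : D) (f : Hom a b), W N f <-> W M (fmap U f))
  (Hunit : forall X : C, cofibrant M X ->
      (exists Y : D, weakly_equivalent M X (U Y)) -> W M (adj_unit A X))
  (M' : ModelStructure C)
  (HM' : left_Bousfield_localization M' M)
  (Hfib : forall X : C, fibrant M' X <->
      (fibrant M X /\ exists Y : D, weakly_equivalent M X (U Y))) :
  QuillenEquivalence M' N L U A.
Proof.
  split; [exact (QuillenPair_loc HQ HM' Hfib)|].
  intros X Y f HX HY. split.
  - exact (W_loc_adjunct_of_W HQ Hcreate Hunit HM' Hfib X Y f HX).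
  - exact (W_of_W_loc_adjunct HQ Hcreate Hunit HM' Hfib X Y f HX HY).
Qed.
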